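(* Let $k,n$ be positive integers with $k\leqslant n$, and let $X\subseteq [n]^k_<$ have the quasi-exchange property. Then every linear extension of $X$ (with respect to the Bruhat order) is a shelling order.
   Context: $[n]:=\{1,\ldots,n\}$. $[n]^k_<$ denotes the set of $k$-element subsets of $[n]$, each identified with the increasing tuple $x=(x_1<\cdots<x_k)$ of its elements (so set operations $\cap,\cup,\setminus$ and the symmetric difference $A+B:=(A\setminus B)\cup(B\setminus A)$ make sense). A subset $X\subseteq[n]^k_<$ is viewed as (the set of facets of) a pure $(k-1)$-dimensional simplicial complex. The Bruhat order on $[n]^k_<$ is: $x\leqslant y$ iff $x_i\leqslant y_i$ for all $i\in[k]$. $\mathrm{Conf}([n]^k_<)$ is the set of finite tuples $C=(C_1,\ldots,C_h)$, $h\geqslant 1$, of pairwise distinct elements of $[n]^k_<$. A linear extension of $X$ is a tuple $L=(L_1,\ldots,L_h)$ listing every element of $X$ exactly once such that $L_i<L_j$ in the Bruhat order implies $i<j$. A tuple $C=(C_1,\ldots,C_h)\in\mathrm{Conf}([n]^k_<)$ is a shelling order if for all $i<j$ in $[h]$ there exists $z<j$ with $|C_z\cap C_j|=k-1$ and $C_i\cap C_j\subseteq C_z\cap C_j$. $X$ has the quasi-exchange property if for all $x,y\in X$ and every $i\in x\setminus y$ with $i>\max(y\setminus x)$, there exists $j\in y\setminus x$ such that $x+\{i,j\}\in X$. *)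

From mathcomp Require Import all_boot.
Set Implicit Arguments. Unset Strict Implicit. Unset Printing Implicit Defensive.

(* [n] is modelled by 'I_n = {0,...,n-1} (order-preserving shift by one).
   An element of [n]^k_< is a set A : {set 'I_n} with #|A| = k. *)

Definition sorted_tuple (n : nat) (A : {set 'I_n}) : seq nat :=
  sort leq [seq val i | i <- enum A].

Definition bruhat_le (n : nat) (x y : {set 'I_n}) : bool :=
  (#|x| == #|y|) &&
  [forall i : 'I_#|x|, nth 0 (sorted_tuple x) i <= nth 0 (sorted_tuple y) i].

Definition bruhat_lt (n : nat) (x y : {set 'I_n}) : bool :=
  (x != y) && bruhat_le x y.

Definition symdiff (T : finType) (A B : {set T}) : {set T} :=
  (A :\: B) :|: (B :\: A).

Definition k_family (n k : nat) (X : {set {set 'I_n}}) : Prop :=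
  forall x, x \in X -> #|x| = k.

Definition quasi_exchange (n : nat) (X : {set {set 'I_n}}) : Prop :=
  forall x y, x \in X -> y \in X ->
  forall i, i \in x :\: y ->
    (forall j, j \in y :\: x -> val j < val i) ->
    exists2 j, j \in y :\: x & symdiff x [set i; j] \in X.

Definition conf (n k : nat) (C : seq {set 'I_n}) : Prop :=
  0 < size C /\ uniq C /\ (forall c, c \in C -> #|c| = k).

Definition linear_extension (n : nat) (X : {set {set 'I_n}})
  (L : seq {set 'I_n}) : Prop :=
  uniq L /\ (forall x, (x \in L) = (x \in X)) /\
  (forall i j, i < size L -> j < size L ->
     bruhat_lt (nth set0 L i) (nth set0 L j) -> i < j).

Definition shelling_order (n k : nat) (C : seq {set 'I_n}) : Prop :=
  conf k C /\
  forall i j, i < j -> j < size C ->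
    exists2 z, z < j &
      (#|nth set0 C z :&: nth set0 C j| == k.-1) &&
      ((nth set0 C i :&: nth set0 C j) \subset (nth set0 C z :&: nth set0 C j)).

From mathcomp Require Import all_boot.

Set Implicit Arguments.
Unset Strict Implicit.
Unset Printing Implicit Defensive.

(* Fix a facet y = L_j and let x precede it.  Let m be the largest element of
   the symmetric difference x + y.  If m lies in y, quasi-exchange applied to
   (y, x) yields y' = y - m + c with c < m, which is Bruhat-smaller than y,
   hence earlier in L; it meets y in the ridge y - m, which contains x /\ y.
   If m lies in x, quasi-exchange applied to (x, y) yields x' = x - m + c,
   again Bruhat-smaller and hence earlier than x, with x /\ y inside x' /\ y
   and x' closer to y; we conclude by induction on |x \ y|.  The Bruhat
   comparisons follow from the counting description of the order: x <= y iff
   for every t, x has at least as many elements <= t as y. *)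

Lemma nth_leq_count (s : seq nat) i t : sorted leq s -> i < size s ->
  (nth 0 s i <= t) = (i < count (leq^~ t) s).
Proof.
elim: s i => [|a s IHs] i //= sorted_as lt_i_as.
have a_le_s : all (leq a) s by apply: order_path_min => //; apply: leq_trans.
have [le_at | lt_ta] := leqP a t.
  case: i lt_i_as => [|i] //= lt_i_s.
  by rewrite add1n ltnS IHs // (path_sorted sorted_as).
have no_s_le_t : count (leq^~ t) s = 0.
  apply/eqP; rewrite -leqn0 leqNgt -has_count; apply/hasPn => c /(allP a_le_s).
  by rewrite -ltnNge; apply: leq_trans lt_ta.
rewrite no_s_le_t ltn0; case: i lt_i_as => [|i] /= lt_i_s; first by rewrite leqNgt lt_ta.
by rewrite leqNgt (leq_trans lt_ta) // (allP a_le_s) ?mem_nth.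
Qed.

Lemma size_sorted_tuple n (A : {set 'I_n}) : size (sorted_tuple A) = #|A|.
Proof. by rewrite size_sort size_map cardE. Qed.

Lemma sorted_sorted_tuple n (A : {set 'I_n}) : sorted leq (sorted_tuple A).
Proof. exact: (sort_sorted leq_total). Qed.

Lemma count_sorted_tuple n (A : {set 'I_n}) t :
  count (leq^~ t) (sorted_tuple A) = #|[set c in A | val c <= t]|.
Proof.
rewrite (permP (permEl (perm_sort _ _))) count_map -size_filter cardE.
by rewrite /enum_mem -filter_predI; congr size; apply: eq_filter => c; rewrite !inE andbC.
Qed.

Lemma bruhat_le_card n (x y : {set 'I_n}) : #|x| = #|y| ->
  (forall t, #|[set c in y | val c <= t]| <= #|[set c in x | val c <= t]|) ->
  bruhat_le x y.
Proof.
move=> card_xy le_count; apply/andP; split; first exact/eqP.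
apply/forallP => i; set t := nth 0 (sorted_tuple y) i.
rewrite nth_leq_count ?sorted_sorted_tuple ?size_sorted_tuple // count_sorted_tuple.
apply: leq_trans (le_count t).
rewrite -count_sorted_tuple -nth_leq_count ?sorted_sorted_tuple //.
by rewrite size_sorted_tuple -card_xy.
Qed.

Lemma card_exchange n (y : {set 'I_n}) a b : a \in y -> b \notin y ->
  #|b |: (y :\ a)| = #|y|.
Proof.
by move=> a_y b_y; rewrite cardsU1 (cardsD1 a y) a_y !inE negb_and b_y orbT add1n.
Qed.

Section Exchange.
Variables (n : nat) (y : {set 'I_n}) (a b : 'I_n).
Hypotheses (a_in_y : a \in y) (b_notin_y : b \notin y).

Lemma symdiff_exchange : symdiff y [set a; b] = b |: (y :\ a).
Proof.
apply/setP => c; rewrite /symdiff !inE.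
have [->|_] := eqVneq c a.
  by rewrite a_in_y /=; case: eqP b_notin_y => // <-; rewrite a_in_y.
by have [->|_] := eqVneq c b; rewrite ?(negbTE b_notin_y) /= ?andbF ?orbF.
Qed.

Lemma exchange_setI : (b |: (y :\ a)) :&: y = y :\ a.
Proof.
apply/setP => c; rewrite !inE.
have [->|_] := eqVneq c b; first by rewrite (negbTE b_notin_y) !andbF.
by rewrite /= -andbA andbb.
Qed.

Hypothesis lt_ba : val b < val a.

Lemma count_exchange t :
  #|[set c in y | val c <= t]| <= #|[set c in b |: (y :\ a) | val c <= t]|.
Proof.
have [le_at | lt_ta] := leqP (val a) t; last first.
  apply: subset_leq_card; apply/subsetP => c; rewrite !inE => /andP[c_y le_ct].
  have ne_ca : c != a by apply: contraTneq le_ct => ->; rewrite -ltnNge.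
  by rewrite c_y le_ct ne_ca orbT.
have a_small : a \in [set c in y | val c <= t] by rewrite inE a_in_y le_at.
have b_out : b \notin [set c in y | val c <= t] by rewrite inE negb_and b_notin_y.
rewrite -(card_exchange a_small b_out); apply: subset_leq_card.
apply/subsetP => c; rewrite !inE => /orP[/eqP-> | /and3P[-> -> ->]].
  by rewrite eqxx (leq_trans (ltnW lt_ba)).
by rewrite orbT.
Qed.

Lemma bruhat_lt_exchange : bruhat_lt (b |: (y :\ a)) y.
Proof.
apply/andP; split.
  by apply: contraNneq b_notin_y => <-; rewrite setU11.
exact: bruhat_le_card (card_exchange a_in_y b_notin_y) count_exchange.
Qed.

End Exchange.

Lemma symdiffC (T : finType) (A B : {set T}) : symdiff A B = symdiff B A.
Proof. exact: setUC. Qed.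

Lemma symdiff_max_exists n (x y : {set 'I_n}) : x != y ->
  exists2 m, m \in symdiff x y & {in symdiff x y, forall c, val c <= val m}.
Proof.
move=> ne_xy; have [c0 c0_in] : exists c0, c0 \in symdiff x y.
  apply/set0Pn; apply: contraNneq ne_xy.
  by rewrite /symdiff => /eqP; rewrite setU_eq0 !setD_eq0 -eqEsubset.
by case: (arg_maxnP val c0_in) => m; exists m.
Qed.

Lemma quasi_exchange_max n (X : {set {set 'I_n}}) x y m :
  quasi_exchange X -> x \in X -> y \in X -> m \in x :\: y ->
  {in symdiff x y, forall c, val c <= val m} ->
  exists2 c, c \in y :\: x & (val c < val m) && (c |: (x :\ m) \in X).
Proof.
move=> qeX xX yX m_xy m_max.
have lt_m c : c \in y :\: x -> val c < val m.
  move=> c_yx; rewrite ltn_neqAle m_max ?andbT; last by rewrite /symdiff inE c_yx orbT.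
  by apply: contraTneq c_yx => /val_inj->; move: m_xy; rewrite !inE => /andP[_ ->].
have [c c_yx] := qeX x y xX yX m m_xy lt_m.
move: (m_xy) (c_yx); rewrite !inE => /andP[_ m_x] /andP[c_x _].
by rewrite symdiff_exchange // => cX; exists c; rewrite ?lt_m ?cX.
Qed.

Section LinearExtensionShelling.
Variables (n : nat) (X : {set {set 'I_n}}) (L : seq {set 'I_n}).
Hypotheses (qeX : quasi_exchange X) (extL : linear_extension X L).

Let memL x : (x \in L) = (x \in X). Proof. by case: extL => _ []. Qed.

Lemma index_bruhat_lt w v : w \in X -> v \in X -> bruhat_lt w v ->
  index w L < index v L.
Proof.
case: extL => _ [_ ordL] wX vX lt_wv.
by apply: ordL; rewrite ?index_mem ?memL ?nth_index ?memL.
Qed.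

Variables (y : {set 'I_n}).
Hypothesis yX : y \in X.

Lemma ridge_before x : x \in X -> index x L < index y L ->
  exists2 z, z < index y L &
    (#|nth set0 L z :&: y| == #|y|.-1) && (x :&: y \subset nth set0 L z :&: y).
Proof.
have [d] := ubnP #|x :\: y|; elim: d x => // d IHd x lt_xy_d xX lt_x_y.
have ne_xy : x != y by apply: contraTneq lt_x_y => ->; rewrite ltnn.
have [m m_xy m_max] := symdiff_max_exists ne_xy.
have [m_x | m_y] := setUP m_xy.
- have [c c_yx /andP[lt_cm x'X]] := quasi_exchange_max qeX xX yX m_x m_max.
  move: m_x c_yx; rewrite !inE => /andP[m_y m_x] /andP[c_x c_y].
  have lt_x' : index (c |: (x :\ m)) L < index y L.
    by apply: ltn_trans lt_x_y; apply: index_bruhat_lt; rewrite ?bruhat_lt_exchange.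
  have lt_x'y_d : #|(c |: (x :\ m)) :\: y| < d.
    rewrite -ltnS (leq_trans _ lt_xy_d) // (cardsD1 m (x :\: y)) !inE m_y m_x ltnS.
    apply: subset_leq_card; apply/subsetP => e; rewrite !inE.
    case/andP=> e_y /orP[/eqP eq_ec | /andP[-> ->]]; last by rewrite e_y.
    by rewrite eq_ec c_y in e_y.
  have [z lt_z /andP[ridge_z sub_z]] := IHd _ lt_x'y_d x'X lt_x'.
  exists z; rewrite // ridge_z; apply: subset_trans sub_z.
  apply/subsetP => e; rewrite !inE => /andP[e_x e_y].
  have ne_em : e != m by apply: contraTneq e_y => ->.
  by rewrite e_x e_y ne_em orbT.
- rewrite symdiffC in m_max.
  have [c c_xy /andP[lt_cm y'X]] := quasi_exchange_max qeX yX xX m_y m_max.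
  move: m_y c_xy; rewrite !inE => /andP[m_x m_y] /andP[c_y c_x].
  exists (index (c |: (y :\ m)) L).
    by apply: index_bruhat_lt; rewrite ?bruhat_lt_exchange.
  rewrite nth_index ?memL // exchange_setI // (cardsD1 m y) m_y eqxx.
  apply/subsetP => e; rewrite !inE => /andP[e_x e_y].
  have ne_em : e != m by apply: contraTneq e_x => ->.
  by rewrite e_y ne_em.
Qed.

End LinearExtensionShelling.

Theorem theorem3p4 (n k : nat) (X : {set {set 'I_n}}) :
  0 < k -> k <= n -> X != set0 -> k_family k X -> quasi_exchange X ->
  forall L : seq {set 'I_n}, linear_extension X L -> shelling_order k L.
Proof.
move=> _ _ X_neq0 kX qeX L extL.
have [uniqL [memL _]] := extL.
split.
  split; last by split=> // c; rewrite memL => /kX.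
  by case/set0Pn: X_neq0 => x; rewrite -memL; case: (L).
move=> i j lt_ij lt_jL; have lt_iL := ltn_trans lt_ij lt_jL.
set y := nth set0 L j; have yX : y \in X by rewrite -memL mem_nth.
have card_y : #|y| = k by apply: kX.
have xX : nth set0 L i \in X by rewrite -memL mem_nth.
have := ridge_before qeX extL yX xX.
by rewrite !index_uniq // card_y; apply.
Qed.
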